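(* Let $\mathbb{C}$ be a pointed protomodular category and let $X$ be an object of $\mathbb{C}$ with trivial center such that the generic split extension with kernel $X$ exists. A morphism $u:S\to X$ is a characteristic monomorphism if and only if the composite $c_Xu:S\to[X]$ is a Bourn-normal monomorphism.
   Context: $\mathbb{C}$ is pointed with finite limits; protomodular means the split short five lemma holds. A split extension is $X\xrightarrow{\kappa}A\underset{\beta}{\overset{\alpha}{\rightleftarrows}}B$ with $\alpha\beta=1_B$, $\kappa$ a kernel of $\alpha$. A generic split extension with kernel $X$, written $X\xrightarrow{k}[X]\ltimes X\underset{i}{\overset{p_1}{\rightleftarrows}}[X]$, is a terminal object in the category of split extensions with kernel $X$ and morphisms whose kernel component is $1_X$. The conjugation morphism $c_X:X\to[X]$ is the codomain component of the unique such morphism from $X\xrightarrow{\langle0,1\rangle}X\times X\underset{\langle1,1\rangle}{\overset{\pi_1}{\rightleftarrows}}X$ to the generic one. The center of $X$ is the terminal object among morphisms $g:B\to X$ commuting with $1_X$ (some $\varphi:B\times X\to X$ has $\varphi\langle1,0\rangle=g$, $\varphi\langle0,1\rangle=1_X$); trivial center means it is $0$. A monomorphism $m:S\to Y$ is Bourn-normal if there is an equivalence relation $(R,r_1,r_2)$ on $Y$ and $\tilde m:S\times S\to R$ with $r_1\tilde m=m\pi_1$, $r_2\tilde m=m\pi_2$ and the square $r_1\tilde m=m\pi_1$ a pullback. A morphism $u:S\to X$ is a characteristic monomorphism if for every Bourn-normal monomorphism $n:X\to Y$ the composite $nu$ is a Bourn-normal monomorphism. *)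

Set Implicit Arguments.
Unset Strict Implicit.

Record Cat := {
  ob :> Type;
  hom : ob -> ob -> Type;
  idm : forall A, hom A A;
  comp : forall A B C, hom B C -> hom A B -> hom A C;
  comp_assoc : forall A B C D (h : hom C D) (g : hom B C) (f : hom A B),
      comp h (comp g f) = comp (comp h g) f;
  comp_id_l : forall A B (f : hom A B), comp (idm B) f = f;
  comp_id_r : forall A B (f : hom A B), comp f (idm A) = f }.

Arguments hom {c} _ _.
Arguments idm {c} A.
Arguments comp {c A B C} _ _.
Notation "g ∘ f" := (comp g f) (at level 40, left associativity).

Record Pointed (C : Cat) := {
  zob : C;
  to_zero : forall A : C, hom A zob;
  from_zero : forall A : C, hom zob A;
  to_zero_uniq : forall (A : C) (f : hom A zob), f = to_zero A;
  from_zero_uniq : forall (A : C) (f : hom zob A), f = from_zero A }.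

Record Products (C : Cat) := {
  prod : C -> C -> C;
  pr1 : forall A B : C, hom (prod A B) A;
  pr2 : forall A B : C, hom (prod A B) B;
  pair : forall T A B : C, hom T A -> hom T B -> hom T (prod A B);
  pair_pr1 : forall (T A B : C) (f : hom T A) (g : hom T B), pr1 A B ∘ pair f g = f;
  pair_pr2 : forall (T A B : C) (f : hom T A) (g : hom T B), pr2 A B ∘ pair f g = g;
  pair_uniq : forall (T A B : C) (h : hom T (prod A B)),
      h = pair (pr1 A B ∘ h) (pr2 A B ∘ h) }.
Arguments pair {C} p {T A B} _ _.

(** Chosen equalizers (with the zero object and products: all finite limits). *)
Record Equalizers (C : Cat) := {
  eqz : forall A B : C, hom A B -> hom A B -> C;
  eqz_in : forall (A B : C) (f g : hom A B), hom (eqz f g) A;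
  eqz_eq : forall (A B : C) (f g : hom A B), f ∘ eqz_in f g = g ∘ eqz_in f g;
  eqz_lift : forall (A B : C) (f g : hom A B) (T : C) (h : hom T A),
      f ∘ h = g ∘ h -> exists k : hom T (eqz f g), eqz_in f g ∘ k = h;
  eqz_mono : forall (A B : C) (f g : hom A B) (T : C) (k k' : hom T (eqz f g)),
      eqz_in f g ∘ k = eqz_in f g ∘ k' -> k = k' }.

Section Notions.
Context {C : Cat}.

Definition mono {S Y : C} (m : hom S Y) : Prop :=
  forall (T : C) (f g : hom T S), m ∘ f = m ∘ g -> f = g.

Definition iso {A B : C} (f : hom A B) : Prop :=
  exists g : hom B A, g ∘ f = idm A /\ f ∘ g = idm B.

Variable Z : Pointed C.

Definition zmor (A B : C) : hom A B := from_zero Z B ∘ to_zero Z A.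

Definition is_kernel {X A B : C} (k : hom X A) (a : hom A B) : Prop :=
  a ∘ k = zmor X B /\
  forall (T : C) (h : hom T A), a ∘ h = zmor T B -> exists! x : hom T X, k ∘ x = h.

Definition split_ext {X A B : C} (k : hom X A) (a : hom A B) (b : hom B A) : Prop :=
  a ∘ b = idm B /\ is_kernel k a.

Definition split_ext_morph {X A B X' A' B' : C}
  (k : hom X A) (a : hom A B) (b : hom B A)
  (k' : hom X' A') (a' : hom A' B') (b' : hom B' A')
  (fX : hom X X') (fA : hom A A') (fB : hom B B') : Prop :=
  fA ∘ k = k' ∘ fX /\ a' ∘ fA = fB ∘ a /\ fA ∘ b = b' ∘ fB.

(** protomodular: the split short five lemma holds *)
Definition protomodular : Prop :=
  forall (X A B X' A' B' : C)
    (k : hom X A) (a : hom A B) (b : hom B A)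
    (k' : hom X' A') (a' : hom A' B') (b' : hom B' A')
    (fX : hom X X') (fA : hom A A') (fB : hom B B'),
    split_ext k a b -> split_ext k' a' b' ->
    split_ext_morph k a b k' a' b' fX fA fB ->
    iso fX -> iso fB -> iso fA.

Definition is_generic_split_ext {X GA GB : C}
  (k : hom X GA) (p1 : hom GA GB) (i : hom GB GA) : Prop :=
  split_ext k p1 i /\
  forall (A B : C) (kk : hom X A) (a : hom A B) (b : hom B A),
    split_ext kk a b ->
    (exists (fA : hom A GA) (fB : hom B GB),
        split_ext_morph kk a b k p1 i (idm X) fA fB) /\
    (forall (fA fA' : hom A GA) (fB fB' : hom B GB),
        split_ext_morph kk a b k p1 i (idm X) fA fB ->
        split_ext_morph kk a b k p1 i (idm X) fA' fB' ->
        fA = fA' /\ fB = fB').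

Variable P : Products C.

Definition is_conjugation {X GA GB : C}
  (k : hom X GA) (p1 : hom GA GB) (i : hom GB GA) (c : hom X GB) : Prop :=
  exists fA : hom (prod P X X) GA,
    split_ext_morph (pair P (zmor X X) (idm X)) (pr1 P X X) (pair P (idm X) (idm X))
                    k p1 i (idm X) fA c.

Definition commutes_with_id {B X : C} (g : hom B X) : Prop :=
  exists phi : hom (prod P B X) X,
    phi ∘ pair P (idm B) (zmor B X) = g /\ phi ∘ pair P (zmor X B) (idm X) = idm X.

Definition is_center {Zc X : C} (z : hom Zc X) : Prop :=
  commutes_with_id z /\
  forall (B : C) (g : hom B X), commutes_with_id g -> exists! h : hom B Zc, z ∘ h = g.

Definition trivial_center (X : C) : Prop := is_center (zmor (zob Z) X).

Definition equiv_rel {R Y : C} (r1 r2 : hom R Y) : Prop :=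
  (forall (T : C) (f g : hom T R), r1 ∘ f = r1 ∘ g -> r2 ∘ f = r2 ∘ g -> f = g) /\
  (exists d : hom Y R, r1 ∘ d = idm Y /\ r2 ∘ d = idm Y) /\
  (exists s : hom R R, r1 ∘ s = r2 /\ r2 ∘ s = r1) /\
  (forall (T : C) (x y : hom T R), r2 ∘ x = r1 ∘ y ->
     exists t : hom T R, r1 ∘ t = r1 ∘ x /\ r2 ∘ t = r2 ∘ y).

Definition Bourn_normal {S Y : C} (m : hom S Y) : Prop :=
  mono m /\
  exists (R : C) (r1 r2 : hom R Y) (mt : hom (prod P S S) R),
    equiv_rel r1 r2 /\
    r1 ∘ mt = m ∘ pr1 P S S /\ r2 ∘ mt = m ∘ pr2 P S S /\
    (forall (T : C) (x : hom T R) (y : hom T S), r1 ∘ x = m ∘ y ->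
       exists! h : hom T (prod P S S), mt ∘ h = x /\ pr1 P S S ∘ h = y).

Definition characteristic {S X : C} (u : hom S X) : Prop :=
  forall (Y : C) (n : hom X Y), Bourn_normal n -> Bourn_normal (n ∘ u).

End Notions.


(* Write [X]⋉X ⇄ [X] for the generic split extension [GA ⇄ GB].  Pulling it back
   along its own retraction [p1] and mapping the result back to it yields
   [q : GA -> GB], and the conjugation [c] is normal to the equivalence relation
   [(p1, q)] on [GA].  That [(p1, q)] is jointly monic reduces, by
   protomodularity, to [c] being monic, and [c] is monic because anything it
   kills commutes with [1_X], hence is zero as the center is trivial.  So a
   characteristic [u] makes [c u] normal.  Conversely, if [n : X -> Y] is normal
   to [R], the split extension [R ⇄ Y] with kernel [X] maps to the generic one
   with some codomain component [phi] satisfying [phi n = c]; if [c u] is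
   normal to [Q], then [n u] is normal to [R ∩ (phi × phi)⁻¹ Q]. *)

Section ZeroAndPairs.
Context {C : Cat} (Z : Pointed C) (P : Products C).

Lemma comp_zmor {A B B' : C} (f : hom B B') : f ∘ zmor Z A B = zmor Z A B'.
Proof. unfold zmor. rewrite comp_assoc. f_equal. apply from_zero_uniq. Qed.

Lemma zmor_comp {A B D : C} (g : hom A B) : zmor Z B D ∘ g = zmor Z A D.
Proof. unfold zmor. rewrite <- comp_assoc. f_equal. apply to_zero_uniq. Qed.

Lemma zmor_from_zero (A : C) : zmor Z (zob Z) A = from_zero Z A.
Proof. unfold zmor. rewrite <- (to_zero_uniq (idm (zob Z))). apply comp_id_r. Qed.

Lemma pair_ext {T A B : C} (h h' : hom T (prod P A B)) :
  pr1 P A B ∘ h = pr1 P A B ∘ h' -> pr2 P A B ∘ h = pr2 P A B ∘ h' -> h = h'.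
Proof. intros H1 H2. rewrite (pair_uniq h), (pair_uniq h'), H1, H2. reflexivity. Qed.

Lemma pair_comp {T T' A B : C} (f : hom T A) (g : hom T B) (h : hom T' T) :
  pair P f g ∘ h = pair P (f ∘ h) (g ∘ h).
Proof. apply pair_ext; rewrite comp_assoc, ?pair_pr1, ?pair_pr2; reflexivity. Qed.

Lemma pair_pr1_pr2 {A B : C} : pair P (pr1 P A B) (pr2 P A B) = idm _.
Proof. apply pair_ext; rewrite ?pair_pr1, ?pair_pr2, comp_id_r; reflexivity. Qed.

Lemma pair_pr1_assoc {T A B W : C} (z : hom A W) (f : hom T A) (g : hom T B) :
  z ∘ pr1 P A B ∘ pair P f g = z ∘ f.
Proof. rewrite <- comp_assoc, pair_pr1. reflexivity. Qed.

Lemma pair_pr2_assoc {T A B W : C} (z : hom B W) (f : hom T A) (g : hom T B) :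
  z ∘ pr2 P A B ∘ pair P f g = z ∘ g.
Proof. rewrite <- comp_assoc, pair_pr2. reflexivity. Qed.

Lemma pair_comp_assoc {T T' A B W : C} (z : hom (prod P A B) W)
  (f : hom T A) (g : hom T B) (h : hom T' T) :
  z ∘ pair P f g ∘ h = z ∘ pair P (f ∘ h) (g ∘ h).
Proof. rewrite <- comp_assoc, pair_comp. reflexivity. Qed.

End ZeroAndPairs.

Lemma comp_eq_l2 {C : Cat} {A B D W : C} (a : hom B D) (b : hom A B) r (z : hom D W) :
  a ∘ b = r -> z ∘ a ∘ b = z ∘ r.
Proof. intros H. rewrite <- comp_assoc, H. reflexivity. Qed.

Lemma comp_eq_l3 {C : Cat} {A B D F W : C} (a : hom D F) (b : hom B D) (c : hom A B) r
  (z : hom F W) :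
  a ∘ b ∘ c = r -> z ∘ a ∘ b ∘ c = z ∘ r.
Proof. intros H. rewrite <- H, !comp_assoc. reflexivity. Qed.

Lemma comp_eq_l4 {C : Cat} {A B D F G W : C} (a : hom F G) (b : hom D F) (c : hom B D)
  (d : hom A B) r (z : hom G W) :
  a ∘ b ∘ c ∘ d = r -> z ∘ a ∘ b ∘ c ∘ d = z ∘ r.
Proof. intros H. rewrite <- H, !comp_assoc. reflexivity. Qed.

#[export] Hint Rewrite @comp_id_l @comp_id_r @comp_assoc @comp_zmor @zmor_comp @pair_pr1
  @pair_pr2 @pair_pr1_assoc @pair_pr2_assoc @pair_comp @pair_comp_assoc @pair_pr1_pr2 : cat.

(** [simp_cat] normalises composites to left-associated chains; [rw_cat H]
    normalises and then rewrites with an equation [H] whose left-hand side is a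
    chain of length at most four, wherever it occurs as a segment of a chain. *)
Ltac simp_cat := autorewrite with cat.
Ltac rw_cat H :=
  simp_cat;
  repeat first [ rewrite H | rewrite (comp_eq_l2 _ _ _ _ H)
               | rewrite (comp_eq_l3 _ _ _ _ _ H) | rewrite (comp_eq_l4 _ _ _ _ _ _ H) ];
  simp_cat.

Section SplitExtensions.
Context {C : Cat} (Z : Pointed C) (P : Products C).

Lemma iso_idm (A : C) : iso (idm A).
Proof. exists (idm A). rewrite comp_id_l. auto. Qed.

Lemma kernel_mono {X A B : C} (k : hom X A) (a : hom A B) : is_kernel Z k a -> mono k.
Proof.
  intros [Hk0 Hk] T f g Hfg.
  assert (Hkf : a ∘ (k ∘ f) = zmor Z T B) by (rewrite comp_assoc, Hk0; simp_cat; reflexivity).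
  destruct (Hk T _ Hkf) as [x [_ Hx]].
  rewrite <- (Hx f eq_refl), <- (Hx g (eq_sym Hfg)). reflexivity.
Qed.

Lemma split_ext_product (B X : C) (s : hom B X) :
  split_ext Z (pair P (zmor Z X B) (idm X)) (pr1 P B X) (pair P (idm B) s).
Proof.
  split; [simp_cat; reflexivity|]. split; [simp_cat; reflexivity|].
  intros T h Hh. exists (pr2 P B X ∘ h). split.
  - apply pair_ext; simp_cat; [rewrite Hh|]; reflexivity.
  - intros x Hx. rewrite <- Hx. simp_cat. reflexivity.
Qed.

Lemma split_ext_morph_id {X A B : C} (k : hom X A) (a : hom A B) (b : hom B A) :
  split_ext_morph k a b k a b (idm X) (idm A) (idm B).
Proof. split; [|split]; simp_cat; reflexivity. Qed.

Lemma split_ext_morph_comp {X A B A' B' A'' B'' : C}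
  {k : hom X A} {a : hom A B} {b : hom B A}
  {k' : hom X A'} {a' : hom A' B'} {b' : hom B' A'}
  {k'' : hom X A''} {a'' : hom A'' B''} {b'' : hom B'' A''}
  {fA : hom A A'} {fB : hom B B'} {gA : hom A' A''} {gB : hom B' B''} :
  split_ext_morph k a b k' a' b' (idm X) fA fB ->
  split_ext_morph k' a' b' k'' a'' b'' (idm X) gA gB ->
  split_ext_morph k a b k'' a'' b'' (idm X) (gA ∘ fA) (gB ∘ fB).
Proof.
  intros [F1 [F2 F3]] [G1 [G2 G3]]. split; [|split].
  - rewrite <- comp_assoc, F1, comp_assoc, G1. simp_cat. reflexivity.
  - rewrite comp_assoc, G2, <- comp_assoc, F2, comp_assoc. reflexivity.
  - rewrite <- comp_assoc, F3, comp_assoc, G3, comp_assoc. reflexivity.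
Qed.

End SplitExtensions.

Section Pullbacks.
Context {C : Cat} (Z : Pointed C) (P : Products C) (E : Equalizers C).

Definition pullback {B' A B : C} (f : hom B' B) (a : hom A B) : C :=
  eqz E (f ∘ pr1 P B' A) (a ∘ pr2 P B' A).

Definition pullback_in {B' A B : C} (f : hom B' B) (a : hom A B) :
  hom (pullback f a) (prod P B' A) :=
  eqz_in E (f ∘ pr1 P B' A) (a ∘ pr2 P B' A).

Lemma pullback_sq {B' A B : C} (f : hom B' B) (a : hom A B) :
  f ∘ pr1 P B' A ∘ pullback_in f a = a ∘ pr2 P B' A ∘ pullback_in f a.
Proof. apply eqz_eq. Qed.

Lemma pullback_lift {B' A B T : C} (f : hom B' B) (a : hom A B) (u : hom T B') (v : hom T A) :
  f ∘ u = a ∘ v -> exists l, pullback_in f a ∘ l = pair P u v.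
Proof. intros H. apply eqz_lift. simp_cat. exact H. Qed.

Lemma pullback_in_mono {B' A B T : C} (f : hom B' B) (a : hom A B) (l l' : hom T (pullback f a)) :
  pullback_in f a ∘ l = pullback_in f a ∘ l' -> l = l'.
Proof. apply eqz_mono. Qed.

Section PullbackExtension.
Context {X A B B' : C} {k : hom X A} {a : hom A B} {f : hom B' B} {s : hom B' A}
  {kl : hom X (pullback f a)} {sl : hom B' (pullback f a)}
  (Hkl : pullback_in f a ∘ kl = pair P (zmor Z X B') k)
  (Hsl : pullback_in f a ∘ sl = pair P (idm B') s).

Lemma split_ext_pullback : is_kernel Z k a -> split_ext Z kl (pr1 P B' A ∘ pullback_in f a) sl.
Proof.
  intros [Hk0 Hkuniv].
  split; [rw_cat Hsl; reflexivity|]. split; [rw_cat Hkl; reflexivity|].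
  intros T h Hh.
  assert (Ha : a ∘ (pr2 P B' A ∘ pullback_in f a ∘ h) = zmor Z T B).
  { simp_cat. rewrite <- pullback_sq. rw_cat Hh. reflexivity. }
  destruct (Hkuniv T _ Ha) as [x [Hx Hxu]].
  exists x. split.
  - apply pullback_in_mono. simp_cat. rw_cat Hkl.
    apply pair_ext; simp_cat; [rewrite Hh|rewrite Hx]; reflexivity.
  - intros x' Hx'. apply Hxu. rewrite <- Hx'. simp_cat. rw_cat Hkl. reflexivity.
Qed.

Lemma split_ext_morph_to_pullback {A'' B'' : C}
  (k' : hom X A'') (a' : hom A'' B'') (b' : hom B'' A'') (g : hom B'' B') (h : hom A'' A) :
  split_ext Z k' a' b' -> f ∘ g ∘ a' = a ∘ h -> h ∘ k' = k -> h ∘ b' = s ∘ g ->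
  exists j, pullback_in f a ∘ j = pair P (g ∘ a') h /\
    split_ext_morph k' a' b' kl (pr1 P B' A ∘ pullback_in f a) sl (idm X) j g.
Proof.
  intros [Hab' [Hk0' _]] Hfg Hhk Hhb.
  destruct (pullback_lift f a (g ∘ a') h) as [j Hj]; [rewrite comp_assoc; exact Hfg|].
  exists j. split; [exact Hj|]. split; [|split].
  - apply pullback_in_mono. simp_cat. rw_cat Hj. rw_cat Hkl. rw_cat Hk0'. rw_cat Hhk.
    reflexivity.
  - simp_cat. rw_cat Hj. reflexivity.
  - apply pullback_in_mono. simp_cat. rw_cat Hj. rw_cat Hsl. rw_cat Hab'. rw_cat Hhb.
    reflexivity.
Qed.

End PullbackExtension.
End Pullbacks.

Section Protomodular.
Context {C : Cat} (Z : Pointed C) (P : Products C) (E : Equalizers C)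
  (Hprot : protomodular Z).

(** The morphism factors through the pullback extension by a morphism which
    the split short five lemma makes invertible. *)
Lemma split_ext_morph_pullback {X A B A' B' : C}
  (k : hom X A) (a : hom A B) (b : hom B A)
  (k' : hom X A') (a' : hom A' B') (b' : hom B' A') (fA : hom A' A) (fB : hom B' B) :
  split_ext Z k a b -> split_ext Z k' a' b' ->
  split_ext_morph k' a' b' k a b (idm X) fA fB ->
  forall (T : C) (x : hom T A) (y : hom T B'), a ∘ x = fB ∘ y ->
  exists! h, fA ∘ h = x /\ a' ∘ h = y.
Proof.
  intros HS HS' [M1 [M2 M3]] T x y Hxy.
  pose proof HS as [Hab Hk]. pose proof Hk as [Hk0 _].
  destruct (pullback_lift P E fB a (zmor Z X B') k) as [kl Hkl]; [simp_cat; now rewrite Hk0|].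
  destruct (pullback_lift P E fB a (idm B') (b ∘ fB)) as [sl Hsl]; [simp_cat; now rw_cat Hab|].
  pose proof (split_ext_pullback Z P E Hkl Hsl Hk) as HP.
  destruct (split_ext_morph_to_pullback Z P E Hkl Hsl k' a' b' (idm B') fA HS')
    as [j [Hj Mj]]; simp_cat; [now rewrite M2 | rewrite M1; simp_cat; reflexivity | exact M3 |].
  destruct (Hprot _ _ _ _ _ _ _ _ _ _ _ _ _ _ _ HS' HP Mj (iso_idm X) (iso_idm B'))
    as [j' [Hj'1 Hj'2]].
  destruct (pullback_lift P E fB a y x) as [l Hl]; [now rewrite Hxy|].
  exists (j' ∘ l). split; [split|].
  - transitivity (pr2 P B' A ∘ pullback_in P E fB a ∘ j ∘ j' ∘ l).
    + rw_cat Hj. reflexivity.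
    + rw_cat Hj'2. rw_cat Hl. reflexivity.
  - transitivity (pr1 P B' A ∘ pullback_in P E fB a ∘ j ∘ j' ∘ l).
    + rw_cat Hj. reflexivity.
    + rw_cat Hj'2. rw_cat Hl. reflexivity.
  - intros h [H1 H2].
    assert (Hjh : j ∘ h = l).
    { apply pullback_in_mono. simp_cat. rw_cat Hj. rw_cat Hl. now rewrite H1, H2. }
    subst l. simp_cat. rw_cat Hj'1. reflexivity.
Qed.

(** The kernel pair of a morphism with zero kernel is a split extension with
    zero kernel, hence isomorphic to the trivial extension of its domain. *)
Lemma mono_of_zero_kernel {A B : C} (f : hom A B) :
  (forall (T : C) (h : hom T A), f ∘ h = zmor Z T B -> h = zmor Z T A) -> mono f.
Proof.
  intros Hf.
  destruct (pullback_lift P E f f (idm A) (idm A)) as [d Hd]; [reflexivity|].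
  assert (S1 : split_ext Z (from_zero Z _) (pr1 P A A ∘ pullback_in P E f f) d).
  { split; [simp_cat; rw_cat Hd; reflexivity|]. split.
    - rewrite zmor_from_zero. apply from_zero_uniq.
    - intros T h Hh. exists (to_zero Z T). split.
      + change (zmor Z T _ = h). symmetry. apply pullback_in_mono. simp_cat.
        apply pair_ext; simp_cat; [assumption|].
        apply Hf. simp_cat. rewrite <- pullback_sq. rw_cat Hh. reflexivity.
      + intros x _. symmetry. apply to_zero_uniq. }
  assert (S2 : split_ext Z (from_zero Z A) (idm A) (idm A)).
  { split; [simp_cat; reflexivity|]. split.
    - rewrite zmor_from_zero. simp_cat. reflexivity.
    - intros T h Hh. exists (to_zero Z T). split.
      + rewrite comp_id_l in Hh. rewrite Hh. reflexivity.
      + intros x _. symmetry. apply to_zero_uniq. }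
  assert (M : split_ext_morph (from_zero Z A) (idm A) (idm A)
                (from_zero Z _) (pr1 P A A ∘ pullback_in P E f f) d (idm _) d (idm A)).
  { split; [|split]; simp_cat.
    - rewrite (from_zero_uniq (d ∘ from_zero Z A)). reflexivity.
    - rw_cat Hd. reflexivity.
    - reflexivity. }
  destruct (Hprot _ _ _ _ _ _ _ _ _ _ _ _ _ _ _ S2 S1 M (iso_idm _) (iso_idm A))
    as [g [_ Hg]].
  intros T x y Hxy.
  destruct (pullback_lift P E f f x y Hxy) as [l Hl].
  transitivity (pr1 P A A ∘ pullback_in P E f f ∘ d ∘ g ∘ l); [rw_cat Hg; rw_cat Hl; reflexivity|].
  transitivity (pr2 P A A ∘ pullback_in P E f f ∘ d ∘ g ∘ l); [rw_cat Hd; reflexivity|].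
  rw_cat Hg. rw_cat Hl. reflexivity.
Qed.

(** [phi] plays the role of [(t, x) ↦ x - m t]: it makes the extensions of
    [T] by [X] with sections [(1, m)] and [(1, 0)] isomorphic. *)
Lemma commutes_with_id_of_difference {T X : C} (m : hom T X) (phi : hom (prod P T X) X) :
  phi ∘ pair P (zmor Z X T) (idm X) = idm X -> phi ∘ pair P (idm T) m = zmor Z T X ->
  commutes_with_id Z P m.
Proof.
  intros phi01 phi1m.
  assert (Mo : split_ext_morph (pair P (zmor Z X T) (idm X)) (pr1 P T X) (pair P (idm T) m)
                 (pair P (zmor Z X T) (idm X)) (pr1 P T X) (pair P (idm T) (zmor Z T X))
                 (idm X) (pair P (pr1 P T X) phi) (idm T)).
  { split; [|split]; simp_cat; [rewrite phi01| |rewrite phi1m]; reflexivity. }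
  destruct (Hprot _ _ _ _ _ _ _ _ _ _ _ _ _ _ _ (split_ext_product Z P T X m)
              (split_ext_product Z P T X (zmor Z T X)) Mo (iso_idm X) (iso_idm T))
    as [g [Hg _]].
  exists (pr2 P T X ∘ g). split.
  - transitivity (pr2 P T X ∘ g ∘ pair P (pr1 P T X) phi ∘ pair P (idm T) m).
    + simp_cat. rewrite phi1m. reflexivity.
    + rewrite (comp_eq_l2 _ _ _ _ Hg). simp_cat. reflexivity.
  - transitivity (pr2 P T X ∘ g ∘ pair P (pr1 P T X) phi ∘ pair P (zmor Z X T) (idm X)).
    + simp_cat. rewrite phi01. reflexivity.
    + rewrite (comp_eq_l2 _ _ _ _ Hg). simp_cat. reflexivity.
Qed.

End Protomodular.

Section NormalMonos.
Context {C : Cat} (Z : Pointed C) (P : Products C) (E : Equalizers C).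

(** [Bourn_normal P m] unfolds to [mono m /\ exists R r1 r2 mt, normal_via m r1 r2 mt]. *)
Definition normal_via {S Y R : C} (m : hom S Y) (r1 r2 : hom R Y) (mt : hom (prod P S S) R) :
  Prop :=
  equiv_rel r1 r2 /\
  r1 ∘ mt = m ∘ pr1 P S S /\ r2 ∘ mt = m ∘ pr2 P S S /\
  (forall (T : C) (x : hom T R) (y : hom T S), r1 ∘ x = m ∘ y ->
     exists! h : hom T (prod P S S), mt ∘ h = x /\ pr1 P S S ∘ h = y).

Lemma normal_via_split_ext {X Y R : C} (n : hom X Y) (r1 r2 : hom R Y)
  (mt : hom (prod P X X) R) :
  normal_via n r1 r2 mt ->
  exists d, split_ext Z (mt ∘ pair P (zmor Z X X) (idm X)) r1 d /\
    split_ext_morph (pair P (zmor Z X X) (idm X)) (pr1 P X X) (pair P (idm X) (idm X))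
      (mt ∘ pair P (zmor Z X X) (idm X)) r1 d (idm X) mt n.
Proof.
  intros [[Hjm [[d [Hd1 Hd2]] _]] [H1 [H2 Hpb]]].
  exists d. split; [split; [exact Hd1|split]|split; [|split]].
  - simp_cat. rw_cat H1. reflexivity.
  - intros T h Hh.
    destruct (Hpb T h (zmor Z T X)) as [h' [[Hh1 Hh2] Hh']]; [rewrite Hh; simp_cat; reflexivity|].
    exists (pr2 P X X ∘ h'). split.
    + simp_cat. rewrite <- Hh1. f_equal. apply pair_ext; simp_cat; [rewrite Hh2|]; reflexivity.
    + intros x Hx.
      assert (Hxh : h' = pair P (zmor Z T X) x).
      { apply Hh'. split; [rewrite <- Hx|]; simp_cat; reflexivity. }
      subst h'. simp_cat. reflexivity.
  - simp_cat. reflexivity.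
  - exact H1.
  - apply Hjm; simp_cat; rw_cat H1; rw_cat H2; [rw_cat Hd1|rw_cat Hd2]; reflexivity.
Qed.

Section InterPreimage.
Context {Y W R Q : C} (r1 r2 : hom R Y) (q1 q2 : hom Q W) (phi : hom Y W).

(** The relation [R ∩ (phi × phi)⁻¹ Q] on [Y]. *)
Local Notation e := (pullback_in P E (pair P (phi ∘ r1) (phi ∘ r2)) (pair P q1 q2)).

Lemma inter_preimage_sq1 : phi ∘ r1 ∘ pr1 P R Q ∘ e = q1 ∘ pr2 P R Q ∘ e.
Proof.
  transitivity (pr1 P W W ∘ (pair P (phi ∘ r1) (phi ∘ r2) ∘ pr1 P R Q ∘ e));
    [simp_cat; reflexivity|].
  rewrite pullback_sq. simp_cat. reflexivity.
Qed.

Lemma inter_preimage_sq2 : phi ∘ r2 ∘ pr1 P R Q ∘ e = q2 ∘ pr2 P R Q ∘ e.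
Proof.
  transitivity (pr2 P W W ∘ (pair P (phi ∘ r1) (phi ∘ r2) ∘ pr1 P R Q ∘ e));
    [simp_cat; reflexivity|].
  rewrite pullback_sq. simp_cat. reflexivity.
Qed.

Lemma inter_preimage_lift {T : C} (x : hom T R) (y : hom T Q) :
  phi ∘ r1 ∘ x = q1 ∘ y -> phi ∘ r2 ∘ x = q2 ∘ y -> exists l, e ∘ l = pair P x y.
Proof. intros H1 H2. apply pullback_lift. simp_cat. now rewrite H1, H2. Qed.

Lemma equiv_rel_inter_preimage :
  equiv_rel r1 r2 -> equiv_rel q1 q2 -> equiv_rel (r1 ∘ pr1 P R Q ∘ e) (r2 ∘ pr1 P R Q ∘ e).
Proof.
  intros [Rjm [[d [Rd1 Rd2]] [[sr [Rs1 Rs2]] Rtr]]] [Qjm [[dq [Qd1 Qd2]] [[sq [Qs1 Qs2]] Qtr]]].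
  pose proof inter_preimage_sq1 as F1. pose proof inter_preimage_sq2 as F2.
  split; [|split; [|split]].
  - intros T f g H1 H2. apply pullback_in_mono. apply pair_ext.
    + apply Rjm; simp_cat; assumption.
    + apply Qjm; simp_cat.
      * rewrite <- F1. rewrite <- !comp_assoc. f_equal. rewrite !comp_assoc. exact H1.
      * rewrite <- F2. rewrite <- !comp_assoc. f_equal. rewrite !comp_assoc. exact H2.
  - destruct (inter_preimage_lift d (dq ∘ phi)) as [l Hl].
    + rw_cat Rd1. rw_cat Qd1. reflexivity.
    + rw_cat Rd2. rw_cat Qd2. reflexivity.
    + exists l. split; rw_cat Hl; assumption.
  - destruct (inter_preimage_lift (sr ∘ pr1 P R Q ∘ e) (sq ∘ pr2 P R Q ∘ e)) as [l Hl].
    + simp_cat. rw_cat Rs1. rw_cat Qs1. exact F2.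
    + simp_cat. rw_cat Rs2. rw_cat Qs2. exact F1.
    + exists l. split; rw_cat Hl; [rw_cat Rs1|rw_cat Rs2]; reflexivity.
  - intros T x y Hxy. simp_cat.
    destruct (Rtr T (pr1 P R Q ∘ e ∘ x) (pr1 P R Q ∘ e ∘ y)) as [tr [Tr1 Tr2]].
    { simp_cat. exact Hxy. }
    destruct (Qtr T (pr2 P R Q ∘ e ∘ x) (pr2 P R Q ∘ e ∘ y)) as [tq [Tq1 Tq2]].
    { simp_cat. rewrite <- F1, <- F2. rewrite <- !comp_assoc. f_equal.
      rewrite !comp_assoc. exact Hxy. }
    autorewrite with cat in Tr1, Tr2, Tq1, Tq2.
    destruct (inter_preimage_lift tr tq) as [l Hl].
    + rw_cat Tr1. rw_cat F1. rw_cat Tq1. reflexivity.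
    + rw_cat Tr2. rw_cat F2. rw_cat Tq2. reflexivity.
    + exists l. split; rw_cat Hl; simp_cat; [exact Tr1|exact Tr2].
Qed.

End InterPreimage.

(** [n u] is normal to [R ∩ (phi × phi)⁻¹ Q], where [n] is normal to [R] and
    [phi n u] to [Q]. *)
Lemma Bourn_normal_comp_of_postcomp {S X Y W : C} (u : hom S X) (n : hom X Y) (phi : hom Y W) :
  Bourn_normal P n -> mono (phi ∘ n) -> Bourn_normal P (phi ∘ n ∘ u) -> Bourn_normal P (n ∘ u).
Proof.
  intros [Hn [R [r1 [r2 [mtn [ER [R1 [R2 PBR]]]]]]]] Hphin
         [Hmq [Q [q1 [q2 [mtq [EQ [Q1 [Q2 PBQ]]]]]]]].
  set (e := pullback_in P E (pair P (phi ∘ r1) (phi ∘ r2)) (pair P q1 q2)).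
  pose proof (inter_preimage_sq1 r1 r2 q1 q2 phi) as F1.
  pose proof (inter_preimage_sq2 r1 r2 q1 q2 phi) as F2. fold e in F1, F2.
  destruct (inter_preimage_lift r1 r2 q1 q2 phi
              (mtn ∘ pair P (u ∘ pr1 P S S) (u ∘ pr2 P S S)) mtq) as [mt Hmt].
  { simp_cat. rw_cat R1. rw_cat Q1. reflexivity. }
  { simp_cat. rw_cat R2. rw_cat Q2. reflexivity. }
  fold e in Hmt.
  split.
  { intros T f g H. apply Hmq. rw_cat H. reflexivity. }
  exists (pullback P E (pair P (phi ∘ r1) (phi ∘ r2)) (pair P q1 q2)),
         (r1 ∘ pr1 P R Q ∘ e), (r2 ∘ pr1 P R Q ∘ e), mt.
  split; [|split; [|split]].
  - exact (equiv_rel_inter_preimage r1 r2 q1 q2 phi ER EQ).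
  - simp_cat. rw_cat Hmt. rw_cat R1. reflexivity.
  - simp_cat. rw_cat Hmt. rw_cat R2. reflexivity.
  - intros T x y Hxy. simp_cat.
    destruct (PBR T (pr1 P R Q ∘ e ∘ x) (u ∘ y)) as [h1 [[Ha1 Ha2] _]].
    { simp_cat. exact Hxy. }
    destruct (PBQ T (pr2 P R Q ∘ e ∘ x) y) as [h2 [[Hb1 Hb2] Hbu]].
    { simp_cat. rewrite <- F1. rw_cat Hxy. reflexivity. }
    assert (Hh : pair P (u ∘ pr1 P S S ∘ h2) (u ∘ pr2 P S S ∘ h2) = h1).
    { apply pair_ext; simp_cat.
      - rw_cat Hb2. rewrite Ha2. reflexivity.
      - apply Hphin. simp_cat. rewrite <- Q2. rw_cat Hb1. rewrite <- F2.
        rw_cat (eq_sym Ha1). rw_cat R2. reflexivity. }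
    exists h2. split; [split|].
    + apply pullback_in_mono. apply pair_ext; simp_cat.
      * rw_cat Hmt. rw_cat Hh. rewrite Ha1. reflexivity.
      * rw_cat Hmt. exact Hb1.
    + exact Hb2.
    + intros h [H1 H2]. apply Hbu. split; [|exact H2].
      rewrite <- H1. simp_cat. rw_cat Hmt. reflexivity.
Qed.

End NormalMonos.

Section Generic.
Context {C : Cat} (Z : Pointed C) {X GA GB : C} {k : hom X GA} {p1 : hom GA GB}
  {i : hom GB GA} (Hgen : is_generic_split_ext Z k p1 i).

Lemma generic_morph_exists {A B : C} (kk : hom X A) (a : hom A B) (b : hom B A) :
  split_ext Z kk a b -> exists fA fB, split_ext_morph kk a b k p1 i (idm X) fA fB.
Proof. intros H. exact (proj1 (proj2 Hgen _ _ _ _ _ H)). Qed.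

Lemma generic_morph_cod_unique {A B : C} {kk : hom X A} {a : hom A B} {b : hom B A}
  {fA fA' : hom A GA} {fB fB' : hom B GB} :
  split_ext Z kk a b ->
  split_ext_morph kk a b k p1 i (idm X) fA fB ->
  split_ext_morph kk a b k p1 i (idm X) fA' fB' -> fB = fB'.
Proof. intros H M M'. exact (proj2 (proj2 (proj2 Hgen _ _ _ _ _ H) _ _ _ _ M M')). Qed.

End Generic.

Lemma trivial_center_commutes_zero {C : Cat} (Z : Pointed C) (P : Products C) {B X : C}
  (g : hom B X) :
  trivial_center Z P X -> commutes_with_id Z P g -> g = zmor Z B X.
Proof.
  intros [_ Hcen] Hg. destruct (Hcen B g Hg) as [h [Hh _]]. rewrite <- Hh. simp_cat. reflexivity.
Qed.

Section Conjugation.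
Context {C : Cat} (Z : Pointed C) (P : Products C) (E : Equalizers C) (Hprot : protomodular Z)
  {X GA GB : C} {k : hom X GA} {p1 : hom GA GB} {i : hom GB GA}
  (Hgen : is_generic_split_ext Z k p1 i) (Hcen : trivial_center Z P X)
  {c : hom X GB} {fc : hom (prod P X X) GA}
  (Mc : split_ext_morph (pair P (zmor Z X X) (idm X)) (pr1 P X X) (pair P (idm X) (idm X))
          k p1 i (idm X) fc c).

(** If [c m = 0], then [fc ∘ (m × 1)] factors through the kernel [k] of [p1]
    by a difference map for [m]. *)
Lemma conjugation_mono : mono c.
Proof.
  pose proof (proj2 (proj1 Hgen)) as Hk. pose proof Hk as [_ Hkuniv].
  destruct Mc as [M1 [M2 M3]].
  apply (mono_of_zero_kernel Z P E Hprot). intros T m Hm.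
  apply (trivial_center_commutes_zero Z P _ Hcen).
  assert (Hp : p1 ∘ (fc ∘ pair P (m ∘ pr1 P T X) (pr2 P T X)) = zmor Z _ GB).
  { rw_cat M2. rw_cat Hm. reflexivity. }
  destruct (Hkuniv _ _ Hp) as [phi [Hphi _]].
  apply (commutes_with_id_of_difference Z P Hprot m phi); apply (kernel_mono Z _ _ Hk).
  - rw_cat Hphi. rw_cat M1. reflexivity.
  - rw_cat Hphi. transitivity (fc ∘ pair P (idm X) (idm X) ∘ m); [simp_cat; reflexivity|].
    rewrite M3. rw_cat Hm. reflexivity.
Qed.

Lemma conjugation_factors_normal {Y : C} (n : hom X Y) :
  Bourn_normal P n -> exists phi : hom Y GB, phi ∘ n = c.
Proof.
  intros [_ [R [r1 [r2 [mt Hn]]]]].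
  destruct (normal_via_split_ext Z P n r1 r2 mt Hn) as [d [HK MN]].
  destruct (generic_morph_exists Z Hgen _ _ _ HK) as [fR [phi MR]].
  exists phi.
  exact (generic_morph_cod_unique Z Hgen (split_ext_product Z P X X (idm X))
           (split_ext_morph_comp MN MR) Mc).
Qed.

(** [c] is normal to the relation [(p1, q)] on [GA], where [(fE, q)] is the
    morphism from the kernel pair extension of [p1] to the generic one. *)
Section KernelPair.
Local Notation e := (pullback_in P E p1 p1).
Context {kl : hom X (pullback P E p1 p1)} {dl : hom GA (pullback P E p1 p1)}
  (Hkl : e ∘ kl = pair P (zmor Z X GA) k) (Hdl : e ∘ dl = pair P (idm GA) (idm GA))
  {fE : hom (pullback P E p1 p1) GA} {q : hom GA GB}
  (ME : split_ext_morph kl (pr1 P GA GA ∘ e) dl k p1 i (idm X) fE q).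

Lemma kernel_pair_split_ext : split_ext Z kl (pr1 P GA GA ∘ e) dl.
Proof. exact (split_ext_pullback Z P E Hkl Hdl (proj2 (proj1 Hgen))). Qed.

Lemma q_comp_of_morph {A' B' : C} (k' : hom X A') (a' : hom A' B') (b' : hom B' A')
  (g : hom B' GA) (h : hom A' GA) (fA : hom A' GA) (fB : hom B' GB) :
  split_ext Z k' a' b' -> split_ext_morph k' a' b' k p1 i (idm X) fA fB ->
  p1 ∘ g ∘ a' = p1 ∘ h -> h ∘ k' = k -> h ∘ b' = g -> q ∘ g = fB.
Proof.
  intros HS M Hg Hhk Hhb.
  destruct (split_ext_morph_to_pullback Z P E Hkl Hdl k' a' b' g h HS Hg Hhk)
    as [j [_ Mj]]; [now rewrite comp_id_l|].
  exact (generic_morph_cod_unique Z Hgen HS (split_ext_morph_comp Mj ME) M).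
Qed.

Lemma q_k : q ∘ k = c.
Proof.
  pose proof (proj2 (proj1 Hgen)) as [Hk0 _].
  apply (q_comp_of_morph _ _ _ _ (k ∘ pr2 P X X) _ _ (split_ext_product Z P X X (idm X)) Mc);
    simp_cat; [rewrite Hk0|..]; simp_cat; reflexivity.
Qed.

Lemma q_i : q ∘ i = idm GB.
Proof.
  pose proof (proj1 (proj1 Hgen)) as Hi.
  apply (q_comp_of_morph _ _ _ _ (idm GA) _ _ (proj1 Hgen) (split_ext_morph_id k p1 i));
    simp_cat; [rw_cat Hi|..]; reflexivity.
Qed.

Lemma q_fc : q ∘ fc = c ∘ pr2 P X X.
Proof.
  pose proof Mc as [M1 [M2 _]].
  set (K := split_ext_product Z P (prod P X X) X (pr2 P X X)).
  assert (Mb : split_ext_morph (pair P (zmor Z X (prod P X X)) (idm X)) (pr1 P (prod P X X) X)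
                 (pair P (idm _) (pr2 P X X))
                 (pair P (zmor Z X X) (idm X)) (pr1 P X X) (pair P (idm X) (idm X))
                 (idm X) (pair P (pr2 P X X ∘ pr1 P (prod P X X) X) (pr2 P (prod P X X) X))
                 (pr2 P X X)).
  { split; [|split]; simp_cat; reflexivity. }
  apply (q_comp_of_morph _ _ _ _
           (fc ∘ pair P (pr1 P X X ∘ pr1 P (prod P X X) X) (pr2 P (prod P X X) X))
           _ _ K (split_ext_morph_comp Mb Mc)).
  - rw_cat M2. reflexivity.
  - rw_cat M1. reflexivity.
  - simp_cat. reflexivity.
Qed.

(** Both sides are the codomain component of the unique morphism to the generic
    extension from its pullback along [p1 ∘ pr1 ∘ e], factored through the
    kernel pair extension in two ways. *)
Lemma q_fE : q ∘ fE = q ∘ pr2 P GA GA ∘ e.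
Proof.
  pose proof ME as [E1 [E2 _]].
  pose proof (proj2 (proj1 Hgen)) as Hk. pose proof Hk as [Hk0 _].
  set (f' := p1 ∘ pr1 P GA GA ∘ e).
  set (e' := pullback_in P E f' p1).
  destruct (pullback_lift P E f' p1 (zmor Z X _) k) as [kl' Hkl'];
    [unfold f'; simp_cat; now rewrite Hk0|].
  destruct (pullback_lift P E f' p1 (idm _) (pr2 P GA GA ∘ e)) as [sl' Hsl'];
    [unfold f'; simp_cat; apply pullback_sq|].
  fold e' in Hkl', Hsl'.
  pose proof (split_ext_pullback Z P E Hkl' Hsl' Hk) as HW'.
  destruct (generic_morph_exists Z Hgen _ _ _ HW') as [fA [fB MW']].
  assert (Heq' : p1 ∘ pr1 P GA GA ∘ e ∘ pr1 P _ GA ∘ e' = p1 ∘ pr2 P _ GA ∘ e')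
    by exact (pullback_sq P E f' p1).
  destruct (pullback_lift P E p1 p1 (pr1 P GA GA ∘ e ∘ pr1 P _ GA ∘ e') (pr2 P _ GA ∘ e'))
    as [v Hv]; [simp_cat; exact Heq'|].
  transitivity fB.
  - apply (q_comp_of_morph _ _ _ _ (fE ∘ v) _ _ HW' MW').
    + rw_cat E2. rw_cat Hv. reflexivity.
    + assert (Hvk : v ∘ kl' = kl).
      { apply pullback_in_mono. rw_cat Hv. rw_cat Hkl'. rw_cat Hkl. reflexivity. }
      rw_cat Hvk. rewrite E1. simp_cat. reflexivity.
    + assert (Hvs : v ∘ sl' = idm _).
      { apply pullback_in_mono. rw_cat Hv. rw_cat Hsl'. symmetry. apply pair_uniq. }
      rw_cat Hvs. reflexivity.
  - symmetry. rewrite <- comp_assoc.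
    apply (q_comp_of_morph _ _ _ _ (pr2 P _ GA ∘ e') _ _ HW' MW').
    + simp_cat. rewrite <- pullback_sq. exact Heq'.
    + rw_cat Hkl'. reflexivity.
    + rw_cat Hsl'. reflexivity.
Qed.

Lemma pair_p1_q_mono : mono (pair P p1 q).
Proof.
  pose proof (proj2 (proj1 Hgen)) as Hk. pose proof Hk as [_ Hkuniv].
  apply (mono_of_zero_kernel Z P E Hprot). intros T h Hh.
  assert (H1 : p1 ∘ h = zmor Z T GB).
  { transitivity (pr1 P GB GB ∘ (pair P p1 q ∘ h)); [simp_cat; reflexivity|].
    rewrite Hh. simp_cat. reflexivity. }
  assert (H2 : q ∘ h = zmor Z T GB).
  { transitivity (pr2 P GB GB ∘ (pair P p1 q ∘ h)); [simp_cat; reflexivity|].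
    rewrite Hh. simp_cat. reflexivity. }
  destruct (Hkuniv _ _ H1) as [x [Hx _]].
  assert (Hx0 : x = zmor Z T X).
  { apply conjugation_mono. rewrite <- q_k, <- comp_assoc, Hx, H2. simp_cat. reflexivity. }
  subst x. rewrite <- Hx. simp_cat. reflexivity.
Qed.

Lemma equiv_rel_p1_q : equiv_rel p1 q.
Proof.
  pose proof ME as [_ [E2 _]]. pose proof (proj1 (proj1 Hgen)) as Hi.
  split; [|split; [|split]].
  - intros T f g H1 H2. apply pair_p1_q_mono. simp_cat. now rewrite H1, H2.
  - exists i. split; [exact Hi|exact q_i].
  - destruct (pullback_lift P E p1 p1 (idm GA) (i ∘ p1)) as [sg Hsg]; [rw_cat Hi; reflexivity|].
    exists (fE ∘ sg). split.
    + rw_cat E2. rw_cat Hsg. reflexivity.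
    + rw_cat q_fE. rw_cat Hsg. rw_cat q_i. reflexivity.
  - intros T x y Hxy.
    destruct (split_ext_morph_pullback Z P E Hprot k p1 i kl (pr1 P GA GA ∘ e) dl fE q
                (proj1 Hgen) kernel_pair_split_ext ME T y x (eq_sym Hxy))
      as [h [[H1 H2] _]].
    exists (pr2 P GA GA ∘ e ∘ h). split.
    + simp_cat. rewrite <- pullback_sq. rw_cat H2. reflexivity.
    + simp_cat. rewrite <- q_fE. rw_cat H1. reflexivity.
Qed.

Lemma conjugation_normal_via : normal_via P c p1 q fc.
Proof.
  pose proof Mc as [_ [M2 _]].
  split; [exact equiv_rel_p1_q|split; [exact M2|split; [exact q_fc|]]].
  exact (split_ext_morph_pullback Z P E Hprot _ _ _ _ _ _ _ _
           (proj1 Hgen) (split_ext_product Z P X X (idm X)) Mc).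
Qed.

End KernelPair.

Lemma conjugation_Bourn_normal : Bourn_normal P c.
Proof.
  pose proof (proj2 (proj1 Hgen)) as [Hk0 _].
  destruct (pullback_lift P E p1 p1 (zmor Z X GA) k) as [kl Hkl]; [simp_cat; now rewrite Hk0|].
  destruct (pullback_lift P E p1 p1 (idm GA) (idm GA)) as [dl Hdl]; [reflexivity|].
  destruct (generic_morph_exists Z Hgen _ _ _ (kernel_pair_split_ext Hkl Hdl)) as [fE [q ME]].
  split; [exact conjugation_mono|].
  exists GA, p1, q, fc. exact (conjugation_normal_via Hkl Hdl ME).
Qed.

End Conjugation.

Theorem theorem5p3 (C : Cat) (Z : Pointed C) (P : Products C) (E : Equalizers C)
  (Hprot : protomodular Z)
  (X : C) (Hcen : trivial_center Z P X)
  (GA GB : C) (k : hom X GA) (p1 : hom GA GB) (i : hom GB GA)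
  (Hgen : is_generic_split_ext Z k p1 i)
  (c : hom X GB) (Hc : is_conjugation Z P k p1 i c)
  (S : C) (u : hom S X) :
  characteristic P u <-> Bourn_normal P (c ∘ u).
Proof.
  destruct Hc as [fc Mc].
  split.
  - intros Hchar. exact (Hchar _ _ (conjugation_Bourn_normal Z P E Hprot Hgen Hcen Mc)).
  - intros Hcu Y n Hn.
    destruct (conjugation_factors_normal Z P Hgen Mc n Hn) as [phi Hphi].
    apply (Bourn_normal_comp_of_postcomp P E u n phi Hn); rewrite Hphi;
      [exact (conjugation_mono Z P E Hprot Hgen Hcen Mc)|exact Hcu].
Qed.
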